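(* Let $\mathcal G$ be an MMPG arena with leader $l$. If $\sigma^N$ is a Nash equilibrium, $\sigma^L$ is a leader equilibrium and $(\sigma^I,\gamma^I)$ is an incentive equilibrium of $\mathcal G$, then $$r_l(\sigma^N)\;\le\; r_l(\sigma^L)\;\le\; r_l(\sigma^I)-\sum_{p\in P\setminus\{l\}}\gamma^I_p(\sigma^I).$$ (Equivalently, Nash strategy profiles $\subseteq$ leader strategy profiles $\subseteq$ incentive strategy profiles, when strategy profiles are paired with the all-zero incentive profile.) Moreover, there exists an MMPG arena in which every Nash equilibrium gives the leader a strictly smaller raw payoff than every leader equilibrium, and every leader equilibrium gives the leader a strictly smaller payoff than every incentive equilibrium gives her as overall payoff.
   Context: A multi-player mean-payoff game (MMPG) arena is a tuple $\mathcal G=(P,V,(V_p)_{p\in P},v_0,E,(r_p)_{p\in P})$ where $P$ is a finite set of players containing a distinguished leader $l\in P$ (the other players are called followers), $V$ is a finite set of vertices with initial vertex $v_0\in V$, $(V_p)_{p\in P}$ is a partition of $V$ (player $p$ owns $V_p$), $E\subseteq V\times V$ is an edge set such that every vertex has at least one successor, and $r_p:E\to\mathbb Q$ is the reward function of player $p$. A history is a finite sequence $h=v_0v_1\dots v_n$ starting at $v_0$ with $(v_i,v_{i+1})\in E$ for all $i<n$; $\mathsf{last}(h)=v_n$. A play is an infinite such sequence. A strategy of player $p$ is a function $\sigma_p$ assigning to every history $h$ with $\mathsf{last}(h)\in V_p$ a vertex $v$ with $(\mathsf{last}(h),v)\in E$. A strategy profile $\sigma=(\sigma_p)_{p\in P}$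 determines a unique play $\pi_\sigma$. The raw payoff of player $p$ on a play $\pi=v_0v_1\dots$ is $r_p(\pi)=\liminf_{n\to\infty}\frac1n\sum_{i=0}^{n-1}r_p((v_i,v_{i+1}))$, and $r_p(\sigma):=r_p(\pi_\sigma)$. For a profile $\sigma$, a player $p$ and a strategy $\sigma'$ of $p$, $\sigma_{p,\sigma'}$ denotes the profile obtained from $\sigma$ by replacing $p$'s strategy with $\sigma'$. An incentive for a follower $p$ is a function $\gamma_p$ from histories to $\mathbb R_{\ge 0}$; its value on a play $\pi=v_0v_1\dots$ is $\gamma_p(\pi)=\liminf_{n\to\infty}\frac1n\sum_{i=1}^{n}\gamma_p(v_0\dots v_i)$, and $\gamma_p(\sigma):=\gamma_p(\pi_\sigma)$. An incentive profile is $\gamma=(\gamma_p)_{p\in P\setminus\{l\}}$. For a pair $(\sigma,\gamma)$, the overall payoff of a follower $p$ is $r_p(\sigma)+\gamma_p(\sigma)$ and the overall payoff of the leader is $r_l(\sigma)-\sum_{p\in P\setminus\{l\}}\gamma_p(\sigma)$. A strategy profile $\sigma$ is a Nash equilibrium if $r_p(\sigma)\ge r_p(\sigma_{p,\sigma'})$ for all players $p\in P$ and all strategies $\sigma'$ of $p$. It is a leader strategy profile if this holds for all followers $p\in P\setminus\{l\}$; a leader equilibrium is a leader strategy profile maximising $r_l$ among all leader strategy profiles. A pair $(\sigma,\gamma)$ is an incentive strategy profile (ISP) if for every follower $p$ and every strategy $\sigma'$ of $p$: $r_p(\sigma)+\gamma_p(\sigma)\ge r_p(\sigma_{p,\sigma'})+\gamma_p(\sigma_{p,\sigma'})$.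 An incentive equilibrium is an ISP whose leader overall payoff is maximal among all ISPs. *)

From Stdlib Require Import Reals QArith Qreals List ClassicalEpsilon.
Import ListNotations.
Open Scope R_scope.

(** * Extended reals (needed: incentive values may have liminf +oo) *)
Inductive ER : Type := Fin (r : R) | PInf | MInf.

Definition ER_le (x y : ER) : Prop :=
  match x, y with
  | MInf, _ => True
  | _, PInf => True
  | Fin a, Fin b => a <= b
  | _, _ => False
  end.

Definition ER_lt (x y : ER) : Prop := ER_le x y /\ x <> y.

(* addition; the undefined case +oo + -oo never arises below *)
Definition ER_add (x y : ER) : ER :=
  match x, y with
  | Fin a, Fin b => Fin (a + b)
  | PInf, MInf | MInf, PInf => Fin 0
  | PInf, _ | _, PInf => PInf
  | MInf, _ | _, MInf => MInf
  end.

Definition ER_opp (x : ER) : ER :=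
  match x with Fin a => Fin (- a) | PInf => MInf | MInf => PInf end.

Definition is_liminf (u : nat -> R) (x : ER) : Prop :=
  match x with
  | Fin l =>
      (forall eps, 0 < eps -> exists N, forall n, (N <= n)%nat -> l - eps < u n) /\
      (forall eps, 0 < eps -> forall N, exists n, (N <= n)%nat /\ u n < l + eps)
  | PInf => forall M, exists N, forall n, (N <= n)%nat -> M < u n
  | MInf => forall M N, exists n, (N <= n)%nat /\ u n < M
  end.

Definition Liminf (u : nat -> R) : ER :=
  epsilon (inhabits PInf) (is_liminf u).

Record arena : Type := {
  Pl : Type;
  Pl_eq_dec : forall p q : Pl, {p = q} + {p <> q};
  Pl_enum : list Pl;
  Pl_enum_nodup : NoDup Pl_enum;
  Pl_enum_full : forall p, In p Pl_enum;
  leader : Pl;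
  Vx : Type;
  Vx_enum : list Vx;
  Vx_enum_full : forall v, In v Vx_enum;
  owner : Vx -> Pl;
  v0 : Vx;
  Ed : Vx -> Vx -> Prop;
  Ed_total : forall v, exists w, Ed v w;
  reward : Pl -> Vx -> Vx -> Q                 (* r_p((v,w)), relevant on edges *)
}.

Section Game.
Variable G : arena.

Definition lastv (h : list (Vx G)) : Vx G := last h (v0 G).

Fixpoint is_path (v : Vx G) (t : list (Vx G)) : Prop :=
  match t with
  | [] => True
  | w :: t' => Ed G v w /\ is_path w t'
  end.

Definition is_history (h : list (Vx G)) : Prop :=
  match h with
  | [] => False
  | v :: t => v = v0 G /\ is_path v t
  end.

Definition strategy := list (Vx G) -> Vx G.
Definition profile := Pl G -> strategy.

Definition valid_strategy (p : Pl G) (s : strategy) : Prop :=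
  forall h, is_history h -> owner G (lastv h) = p -> Ed G (lastv h) (s h).

Definition valid_profile (sigma : profile) : Prop :=
  forall p, valid_strategy p (sigma p).

Definition upd (sigma : profile) (p : Pl G) (s : strategy) : profile :=
  fun q => if Pl_eq_dec G q p then s else sigma q.

Fixpoint hist (sigma : profile) (n : nat) : list (Vx G) :=
  match n with
  | O => [v0 G]
  | S k => let h := hist sigma k in h ++ [sigma (owner G (lastv h)) h]
  end.

Definition play (sigma : profile) (n : nat) : Vx G := lastv (hist sigma n).

Fixpoint sumR (f : nat -> R) (n : nat) : R :=
  match n with O => 0 | S k => sumR f k + f k end.

Definition raw (p : Pl G) (sigma : profile) : ER :=
  Liminf (fun n => sumR (fun i => Q2R (reward G p (play sigma i) (play sigma (S i)))) n
                    / INR n).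

Definition incentive := list (Vx G) -> R.
Definition incprofile := Pl G -> incentive.  (* leader's component is ignored *)

Definition valid_incentive (g : incentive) : Prop :=
  forall h, is_history h -> 0 <= g h.

Definition valid_incprofile (gamma : incprofile) : Prop :=
  forall p, p <> leader G -> valid_incentive (gamma p).

Definition incval (g : incentive) (sigma : profile) : ER :=
  Liminf (fun n => sumR (fun i => g (hist sigma (S i))) n / INR n).

Definition sum_followers (f : Pl G -> ER) : ER :=
  fold_right (fun p acc => if Pl_eq_dec G p (leader G) then acc else ER_add (f p) acc)
             (Fin 0) (Pl_enum G).

Definition overall_follower (p : Pl G) (sigma : profile) (gamma : incprofile) : ER :=
  ER_add (raw p sigma) (incval (gamma p) sigma).

Definition overall_leader (sigma : profile) (gamma : incprofile) : ER :=
  ER_add (raw (leader G) sigma)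
         (ER_opp (sum_followers (fun p => incval (gamma p) sigma))).

Definition nash (sigma : profile) : Prop :=
  valid_profile sigma /\
  forall p s, valid_strategy p s -> ER_le (raw p (upd sigma p s)) (raw p sigma).

Definition leader_sp (sigma : profile) : Prop :=
  valid_profile sigma /\
  forall p s, p <> leader G -> valid_strategy p s ->
    ER_le (raw p (upd sigma p s)) (raw p sigma).

Definition leader_eq (sigma : profile) : Prop :=
  leader_sp sigma /\
  forall sigma', leader_sp sigma' -> ER_le (raw (leader G) sigma') (raw (leader G) sigma).

Definition isp (sigma : profile) (gamma : incprofile) : Prop :=
  valid_profile sigma /\ valid_incprofile gamma /\
  forall p s, p <> leader G -> valid_strategy p s ->
    ER_le (overall_follower p (upd sigma p s) gamma) (overall_follower p sigma gamma).

Definition incentive_eq (sigma : profile) (gamma : incprofile) : Prop :=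
  isp sigma gamma /\
  forall sigma' gamma', isp sigma' gamma' ->
    ER_le (overall_leader sigma' gamma') (overall_leader sigma gamma).

End Game.

(* The three solution concepts are nested: a Nash equilibrium is a leader
   strategy profile, and a leader strategy profile is an incentive strategy
   profile once paired with the zero incentive, which costs the leader nothing.
   Since each equilibrium maximises the leader's payoff over a larger class, the
   leader's payoffs increase along the chain.

   For strictness, take the two-player arena in which the follower first chooses
   between a sink paying (leader 0, follower 1) and handing over to the leader,
   who then picks a sink paying (1, 2) or one paying (3, 0).  In every Nash
   equilibrium the follower exits, since the leader would otherwise be greedy;
   a leader equilibrium commits the leader to (1, 2); an incentive equilibrium
   lets the leader be greedy and pay the follower 1 per step, netting 2. *)

From Stdlib Require Import Reals QArith Qreals List ClassicalEpsilon Lra Lia.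
From Coquelicot Require Import Coquelicot.
Import ListNotations.
Open Scope R_scope.

Definition Rbar_of_ER (x : ER) : Rbar :=
  match x with Fin r => Finite r | PInf => p_infty | MInf => m_infty end.

Lemma is_liminf_LimInf_seq u x : is_liminf u x <-> is_LimInf_seq u (Rbar_of_ER x).
Proof.
  destruct x as [l| |]; simpl; try tauto.
  split.
  - intros [Hev Hinf] eps.
    split; [intros N; apply (Hinf eps (cond_pos eps) N) | apply (Hev eps (cond_pos eps))].
  - intros H; split; intros eps Heps.
    + apply (proj2 (H (mkposreal eps Heps))).
    + apply (proj1 (H (mkposreal eps Heps))).
Qed.

Lemma Liminf_correct u : is_liminf u (Liminf u).
Proof.
  unfold Liminf; apply epsilon_spec.
  destruct (ex_LimInf_seq u) as [[r| |] Hl];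
    [exists (Fin r) | exists PInf | exists MInf]; apply is_liminf_LimInf_seq, Hl.
Qed.

Lemma Liminf_unique u x : is_liminf u x -> Liminf u = x.
Proof.
  intros Hx.
  pose proof (is_LimInf_seq_unique _ _ (proj1 (is_liminf_LimInf_seq _ _) Hx)) as Ex.
  pose proof (is_LimInf_seq_unique _ _
                (proj1 (is_liminf_LimInf_seq _ _) (Liminf_correct u))) as El.
  rewrite Ex in El.
  destruct x, (Liminf u); simpl in El; try discriminate; congruence.
Qed.

Lemma Liminf_ge0 u : (forall n, 0 <= u n) -> ER_le (Fin 0) (Liminf u).
Proof.
  intros Hu; pose proof (Liminf_correct u) as H.
  destruct (Liminf u) as [l| |]; simpl in *; auto.
  - destruct (Rle_dec 0 l) as [|Hl]; auto.
    destruct (proj2 H (- l) ltac:(lra) O) as [n [_ Hn]].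
    specialize (Hu n); lra.
  - destruct (H 0 O) as [n [_ Hn]]; specialize (Hu n); lra.
Qed.

Lemma sumR_const_tail (a : nat -> R) c N :
  (forall i, (N <= i)%nat -> a i = c) ->
  forall k, sumR a (N + k) = sumR a N + INR k * c.
Proof.
  intros Ha k; induction k as [|k IH].
  - rewrite Nat.add_0_r; simpl; ring.
  - rewrite Nat.add_succ_r; simpl sumR.
    rewrite IH, Ha by lia; rewrite S_INR; ring.
Qed.

Lemma Liminf_mean_eventually_const (a : nat -> R) c N :
  (forall i, (N <= i)%nat -> a i = c) ->
  Liminf (fun n => sumR a n / INR n) = Fin c.
Proof.
  intros Ha; apply Liminf_unique, is_liminf_LimInf_seq, (is_lim_LimInf_seq _ (Finite c)).
  apply is_lim_seq_ext_loc with (u := fun n => c + (sumR a N - INR N * c) * / INR n).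
  - exists (S N); intros n Hn.
    pose proof (sumR_const_tail a c N Ha (n - N)) as Hsum.
    replace (N + (n - N))%nat with n in Hsum by lia.
    rewrite Hsum, minus_INR by lia.
    assert (0 < INR n) by (apply lt_0_INR; lia).
    field; lra.
  - replace (Finite c) with (Finite (c + (sumR a N - INR N * c) * 0)) by (f_equal; ring).
    apply is_lim_seq_plus'; [apply is_lim_seq_const|].
    apply (is_lim_seq_scal_l (fun n => / INR n) _ 0).
    replace (Finite 0) with (Rbar_inv p_infty) by reflexivity.
    apply is_lim_seq_inv; [apply is_lim_seq_INR | discriminate].
Qed.

Lemma ER_le_antisym x y : ER_le x y -> ER_le y x -> x = y.
Proof.
  destruct x, y; simpl; try tauto.
  intros; f_equal; apply Rle_antisym; assumption.
Qed.

Lemma ER_lt_Fin a b : a < b -> ER_lt (Fin a) (Fin b).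
Proof. intros Hab; split; [simpl; lra | intros E; injection E; lra]. Qed.

Lemma ER_add_0r x : ER_add x (Fin 0) = x.
Proof. destruct x; simpl; auto; f_equal; ring. Qed.

Section Plays.
Variable G : arena.

Lemma is_path_snoc v t w d :
  is_path G v t -> Ed G (last (v :: t) d) w -> is_path G v (t ++ [w]).
Proof.
  revert v; induction t as [|x t IH]; intros v Hp He; simpl in *.
  - split; auto.
  - destruct Hp; split; auto.
Qed.

Lemma is_history_snoc h w :
  is_history G h -> Ed G (lastv G h) w -> is_history G (h ++ [w]).
Proof.
  destruct h as [|v t]; simpl; [tauto|].
  intros [-> Hp] He; split; [reflexivity | exact (is_path_snoc _ _ _ _ Hp He)].
Qed.

Lemma play_S sigma n :
  play G sigma (S n) = sigma (owner G (play G sigma n)) (hist G sigma n).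
Proof. unfold play, lastv; simpl; apply last_last. Qed.

Variable sigma : profile G.
Hypothesis sigma_valid : valid_profile G sigma.

Lemma hist_is_history n : is_history G (hist G sigma n).
Proof.
  induction n as [|n IH]; [simpl; split; [reflexivity | exact I]|].
  apply is_history_snoc; [exact IH|].
  apply sigma_valid; [exact IH | reflexivity].
Qed.

Lemma play_edge n : Ed G (play G sigma n) (play G sigma (S n)).
Proof. rewrite play_S; apply sigma_valid; [apply hist_is_history | reflexivity]. Qed.

Lemma play_absorbing n :
  (forall w, Ed G (play G sigma n) w -> w = play G sigma n) ->
  forall k, play G sigma (n + k) = play G sigma n.
Proof.
  intros Hsink k; induction k as [|k IH]; [now rewrite Nat.add_0_r|].
  rewrite Nat.add_succ_r; apply Hsink; rewrite <- IH; apply play_edge.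
Qed.

Lemma incval_ge0 g : valid_incentive G g -> ER_le (Fin 0) (incval G g sigma).
Proof.
  intros Hg; apply Liminf_ge0; intros [|n].
  - simpl; unfold Rdiv; rewrite Rmult_0_l; lra.
  - apply Rmult_le_pos; [|left; apply Rinv_0_lt_compat, lt_0_INR; lia].
    induction (S n) as [|k IH]; cbn [sumR]; [lra|].
    pose proof (Hg _ (hist_is_history (S k))); lra.
Qed.

End Plays.

Lemma upd_valid G sigma p s :
  valid_profile G sigma -> valid_strategy G p s -> valid_profile G (upd G sigma p s).
Proof. intros Hv Hs q; unfold upd; destruct (Pl_eq_dec G q p); subst; auto. Qed.

Definition zero_incentive (G : arena) : incprofile G := fun _ _ => 0.

Lemma incval_zero G sigma p : incval G (zero_incentive G p) sigma = Fin 0.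
Proof. apply (Liminf_mean_eventually_const _ 0 0); reflexivity. Qed.

Lemma overall_follower_zero G p sigma :
  overall_follower G p sigma (zero_incentive G) = raw G p sigma.
Proof. unfold overall_follower; rewrite incval_zero; apply ER_add_0r. Qed.

Lemma overall_leader_zero G sigma :
  overall_leader G sigma (zero_incentive G) = raw G (leader G) sigma.
Proof.
  unfold overall_leader, sum_followers.
  induction (Pl_enum G) as [|p l IH]; simpl.
  - rewrite Ropp_0; apply ER_add_0r.
  - destruct (Pl_eq_dec G p (leader G)); [exact IH|].
    rewrite incval_zero; destruct (fold_right _ _ l) as [r| |]; simpl in *; auto.
    rewrite Rplus_0_l; exact IH.
Qed.

Lemma nash_leader_sp G sigma : nash G sigma -> leader_sp G sigma.
Proof. intros [Hv Hdev]; split; auto. Qed.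

Lemma leader_sp_isp G sigma : leader_sp G sigma -> isp G sigma (zero_incentive G).
Proof.
  intros [Hv Hdev]; split; [exact Hv|]; split.
  - intros p _ h _; unfold zero_incentive; lra.
  - intros p s Hp Hs; rewrite !overall_follower_zero; auto.
Qed.

Lemma Q2R_inject_Z z : Q2R (inject_Z z) = IZR z.
Proof. unfold Q2R; simpl; rewrite Rinv_1; apply Rmult_1_r. Qed.

Module Example.

Inductive player := Leader | Follower.

Inductive vertex := Start | Handover | Exit | Fair | Greedy.

Definition player_eq_dec (p q : player) : {p = q} + {p <> q}.
Proof. decide equality. Defined.

Definition edge (v w : vertex) : Prop :=
  match v, w with
  | Start, (Exit | Handover) | Handover, (Fair | Greedy)
  | Exit, Exit | Fair, Fair | Greedy, Greedy => True
  | _, _ => False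
  end.

Definition mover (v : vertex) : player :=
  match v with Start => Follower | _ => Leader end.

(* An edge's reward depends only on its target, so every play earns the rewards
   of the sink it ends in. *)
Definition pay (p : player) (w : vertex) : Z :=
  match p, w with
  | Leader, Fair => 1 | Leader, Greedy => 3
  | Follower, Exit => 1 | Follower, Fair => 2
  | _, _ => 0
  end%Z.

Lemma player_enum_nodup : NoDup [Leader; Follower].
Proof. repeat constructor; simpl; intuition discriminate. Qed.

Lemma player_enum_full p : In p [Leader; Follower].
Proof. destruct p; simpl; auto. Qed.

Lemma vertex_enum_full v : In v [Start; Handover; Exit; Fair; Greedy].
Proof. destruct v; simpl; auto 6. Qed.

Lemma edge_total v : exists w, edge v w.
Proof. exists (match v with Start => Exit | Handover => Fair | _ => v end); now destruct v. Qed.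

Definition G : arena := {|
  Pl := player; Pl_eq_dec := player_eq_dec; Pl_enum := [Leader; Follower];
  Pl_enum_nodup := player_enum_nodup; Pl_enum_full := player_enum_full;
  leader := Leader;
  Vx := vertex; Vx_enum := [Start; Handover; Exit; Fair; Greedy];
  Vx_enum_full := vertex_enum_full;
  owner := mover; v0 := Start; Ed := edge; Ed_total := edge_total;
  reward := fun p _ w => inject_Z (pay p w) |}.

Definition outcome (c1 c2 : vertex) : vertex :=
  match c1 with Handover => c2 | _ => Exit end.

Definition out (s : profile G) : vertex :=
  outcome (s Follower [Start]) (s Leader [Start; Handover]).

Lemma first_move t : valid_strategy G Follower t -> t [Start] = Exit \/ t [Start] = Handover.
Proof.
  intros Ht; pose proof (Ht [Start] (conj eq_refl I) eq_refl) as H.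
  simpl in H; destruct (t [Start]); simpl in H; tauto.
Qed.

Lemma second_move t : valid_strategy G Leader t ->
  t [Start; Handover] = Fair \/ t [Start; Handover] = Greedy.
Proof.
  intros Ht; pose proof (Ht [Start; Handover] (conj eq_refl (conj I I)) eq_refl) as H.
  simpl in H; destruct (t [Start; Handover]); simpl in H; tauto.
Qed.

Lemma valid_choices s : valid_profile G s ->
  (s Follower [Start] = Exit \/ s Follower [Start] = Handover) /\
  (s Leader [Start; Handover] = Fair \/ s Leader [Start; Handover] = Greedy).
Proof. intros Hv; exact (conj (first_move _ (Hv Follower)) (second_move _ (Hv Leader))). Qed.

Lemma play_two s : valid_profile G s -> play G s 2 = out s.
Proof.
  intros Hv; destruct (valid_choices s Hv) as [[Hc1|Hc1] _]; unfold out.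
  - pose proof (play_edge G s Hv 1) as E.
    change (play G s 1) with (s Follower [Start]) in E.
    rewrite Hc1 in *; destruct (play G s 2); simpl in E; tauto.
  - rewrite play_S; change (play G s 1) with (s Follower [Start]).
    change (hist G s 1) with [Start; s Follower [Start]].
    rewrite Hc1; reflexivity.
Qed.

Lemma out_absorbing s : valid_profile G s -> forall w, edge (out s) w -> w = out s.
Proof.
  intros Hv w; unfold out.
  destruct (valid_choices s Hv) as [[-> | ->] [-> | ->]]; destruct w; simpl; tauto.
Qed.

Lemma play_out s : valid_profile G s -> forall i, (2 <= i)%nat -> play G s i = out s.
Proof.
  intros Hv i Hi; replace i with (2 + (i - 2))%nat by lia.
  rewrite play_absorbing, play_two; auto.
  rewrite play_two by exact Hv; apply out_absorbing, Hv.
Qed.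

Lemma raw_out s p : valid_profile G s -> raw G p s = Fin (IZR (pay p (out s))).
Proof.
  intros Hv; apply (Liminf_mean_eventually_const _ _ 1); intros i Hi.
  cbn [reward G]; rewrite Q2R_inject_Z, (play_out s Hv (S i)) by lia; reflexivity.
Qed.

Lemma incval_out s (f : vertex -> R) : valid_profile G s ->
  incval G (fun h => f (lastv G h)) s = Fin (f (out s)).
Proof.
  intros Hv; apply (Liminf_mean_eventually_const _ _ 1); intros i Hi.
  exact (f_equal f (play_out s Hv (S i) ltac:(lia))).
Qed.

Lemma raw_le_iff s s' p : valid_profile G s -> valid_profile G s' ->
  ER_le (raw G p s) (raw G p s') <-> (pay p (out s) <= pay p (out s'))%Z.
Proof.
  intros Hv Hv'; rewrite (raw_out s p Hv), (raw_out s' p Hv'); simpl.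
  split; [apply le_IZR | apply IZR_le].
Qed.

Lemma sum_followers_G f : sum_followers G f = f Follower.
Proof. apply ER_add_0r. Qed.

Definition choose (c1 c2 : vertex) : strategy G :=
  fun h => match lastv G h with Start => c1 | Handover => c2 | v => v end.

Definition profile_of (c1 c2 : vertex) : profile G := fun _ => choose c1 c2.

Lemma choose_valid c1 c2 p :
  edge Start c1 -> edge Handover c2 -> valid_strategy G p (choose c1 c2).
Proof. intros H1 H2 h _ _; unfold choose; destruct (lastv G h); simpl; auto. Qed.

Lemma profile_of_valid c1 c2 :
  edge Start c1 -> edge Handover c2 -> valid_profile G (profile_of c1 c2).
Proof. intros H1 H2 p; apply choose_valid; assumption. Qed.

Lemma out_upd_follower s t :
  out (upd G s Follower t) = outcome (t [Start]) (s Leader [Start; Handover]).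
Proof. reflexivity. Qed.

Lemma out_upd_leader s t :
  out (upd G s Leader t) = outcome (s Follower [Start]) (t [Start; Handover]).
Proof. reflexivity. Qed.

Lemma deviation_unprofitable s p c1 c2 :
  valid_profile G s -> edge Start c1 -> edge Handover c2 ->
  ER_le (raw G p (upd G s p (choose c1 c2))) (raw G p s) ->
  (pay p (out (upd G s p (choose c1 c2))) <= pay p (out s))%Z.
Proof. intros Hv H1 H2; apply raw_le_iff; [apply upd_valid, choose_valid|]; assumption. Qed.

Lemma leader_sp_not_greedy s : leader_sp G s -> out s <> Greedy.
Proof.
  intros [Hv Hdev] Hout.
  pose proof (deviation_unprofitable s Follower Exit Fair Hv I I
                (Hdev Follower (choose Exit Fair) ltac:(discriminate) (choose_valid Exit Fair Follower I I))) as H.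
  rewrite Hout, out_upd_follower in H; simpl in H; lia.
Qed.

Lemma nash_out s : nash G s -> out s = Exit.
Proof.
  intros HN; pose proof (leader_sp_not_greedy s (nash_leader_sp G s HN)) as Hng.
  destruct HN as [Hv Hdev]; unfold out in *.
  destruct (valid_choices s Hv) as [[H1|H1] [H2|H2]]; rewrite H1, ?H2 in *;
    try reflexivity; [|now contradiction Hng].
  pose proof (deviation_unprofitable s Leader Exit Greedy Hv I I
                (Hdev Leader (choose Exit Greedy) (choose_valid Exit Greedy Leader I I))) as H.
  rewrite out_upd_leader in H; unfold out in H; rewrite H1, H2 in H; simpl in H; lia.
Qed.

Lemma leader_sp_payoff_le1 s : leader_sp G s -> ER_le (raw G (leader G) s) (Fin 1).
Proof.
  intros HL; pose proof (leader_sp_not_greedy s HL) as Hng.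
  rewrite (raw_out s (leader G) (proj1 HL)); simpl.
  destruct (out s); simpl; try lra; contradiction.
Qed.

Lemma isp_overall_leader_le2 s g : isp G s g -> ER_le (overall_leader G s g) (Fin 2).
Proof.
  intros [Hv [Hg Hdev]].
  assert (HgF : valid_incentive G (g Follower)) by (apply Hg; discriminate).
  unfold overall_leader; rewrite sum_followers_G, (raw_out s (leader G) Hv).
  pose proof (incval_ge0 G s Hv _ HgF) as Hb.
  destruct (incval G (g Follower) s) as [b| |] eqn:Eb; simpl in Hb |- *; try tauto.
  destruct (out s) eqn:Eo; simpl; try lra.
  (* a greedy leader must compensate the follower for the exit worth 1 *)
  pose proof (choose_valid Exit Fair Follower I I) as Ht.
  pose proof (Hdev Follower _ ltac:(discriminate) Ht) as H.
  pose proof (incval_ge0 G _ (upd_valid _ _ _ _ Hv Ht) _ HgF) as Ha.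
  unfold overall_follower in H.
  rewrite (raw_out _ _ (upd_valid _ _ _ _ Hv Ht)), (raw_out s _ Hv), Eb, Eo in H.
  destruct (incval G (g Follower) (upd G s Follower (choose Exit Fair))) as [a| |];
    simpl in Ha, H; try tauto; lra.
Qed.

Definition sN := profile_of Exit Greedy.
Definition sL := profile_of Handover Fair.
Definition sI := profile_of Handover Greedy.

Definition bonus (v : vertex) : R := match v with Greedy => 1 | _ => 0 end.
Definition gI : incprofile G := fun _ h => bonus (lastv G h).

Lemma nash_sN : nash G sN.
Proof.
  assert (Hv : valid_profile G sN) by exact (profile_of_valid Exit Greedy I I).
  split; [exact Hv|]; intros p t Ht; apply (raw_le_iff _ _ _ (upd_valid _ _ _ _ Hv Ht) Hv).
  destruct p; [rewrite out_upd_leader; simpl; lia|].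
  rewrite out_upd_follower; destruct (first_move t Ht) as [E|E]; rewrite E; simpl; lia.
Qed.

Lemma leader_sp_sL : leader_sp G sL.
Proof.
  assert (Hv : valid_profile G sL) by exact (profile_of_valid Handover Fair I I).
  split; [exact Hv|]; intros p t Hp Ht; apply (raw_le_iff _ _ _ (upd_valid _ _ _ _ Hv Ht) Hv).
  destruct p; [contradiction|].
  rewrite out_upd_follower; destruct (first_move t Ht) as [E|E]; rewrite E; simpl; lia.
Qed.

Lemma isp_sI : isp G sI gI.
Proof.
  assert (Hv : valid_profile G sI) by exact (profile_of_valid Handover Greedy I I).
  split; [exact Hv|]; split.
  - intros p _ h _; unfold gI, bonus; destruct (lastv G h); lra.
  - intros p t Hp Ht; destruct p; [contradiction|].
    pose proof (upd_valid _ _ _ _ Hv Ht) as Hu.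
    unfold overall_follower, gI.
    rewrite (raw_out _ _ Hu), (raw_out _ _ Hv), (incval_out _ _ Hu), (incval_out _ _ Hv).
    rewrite out_upd_follower; destruct (first_move t Ht) as [E|E]; rewrite E; simpl; lra.
Qed.

Lemma overall_leader_sI : overall_leader G sI gI = Fin 2.
Proof.
  pose proof (profile_of_valid Handover Greedy I I) as Hv.
  unfold overall_leader, gI; rewrite sum_followers_G, (raw_out _ _ Hv), (incval_out _ _ Hv).
  simpl; f_equal; lra.
Qed.

Lemma nash_payoff s : nash G s -> raw G (leader G) s = Fin 0.
Proof. intros HN; rewrite (raw_out s (leader G) (proj1 HN)), (nash_out s HN); reflexivity. Qed.

Lemma leader_eq_payoff s : leader_eq G s -> raw G (leader G) s = Fin 1.
Proof.
  intros [HL Hmax]; apply ER_le_antisym; [exact (leader_sp_payoff_le1 s HL)|].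
  pose proof (Hmax sL leader_sp_sL) as H.
  rewrite (raw_out sL (leader G) (proj1 leader_sp_sL)) in H; exact H.
Qed.

Lemma leader_eq_sL : leader_eq G sL.
Proof.
  split; [exact leader_sp_sL|]; intros s Hs.
  rewrite (raw_out sL (leader G) (proj1 leader_sp_sL)).
  exact (leader_sp_payoff_le1 s Hs).
Qed.

Lemma incentive_eq_sI : incentive_eq G sI gI.
Proof.
  split; [exact isp_sI|]; intros s g Hs.
  rewrite overall_leader_sI; exact (isp_overall_leader_le2 s g Hs).
Qed.

Lemma incentive_eq_payoff s g : incentive_eq G s g -> overall_leader G s g = Fin 2.
Proof.
  intros [HI Hmax]; apply ER_le_antisym; [exact (isp_overall_leader_le2 s g HI)|].
  rewrite <- overall_leader_sI; exact (Hmax sI gI isp_sI).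
Qed.

End Example.

Theorem theorem1 :
  (forall (G : arena) (s : profile G), nash G s -> leader_sp G s) /\
  (forall (G : arena) (s : profile G), leader_sp G s -> isp G s (fun _ _ => 0%R)) /\
  (forall (G : arena) (sN sL sI : profile G) (gI : incprofile G),
      nash G sN -> leader_eq G sL -> incentive_eq G sI gI ->
      ER_le (raw G (leader G) sN) (raw G (leader G) sL) /\
      ER_le (raw G (leader G) sL) (overall_leader G sI gI)) /\
  (exists G : arena,
      (exists s, nash G s) /\ (exists s, leader_eq G s) /\
      (exists s g, incentive_eq G s g) /\
      (forall sN sL, nash G sN -> leader_eq G sL ->
         ER_lt (raw G (leader G) sN) (raw G (leader G) sL)) /\
      (forall sL sI gI, leader_eq G sL -> incentive_eq G sI gI ->
         ER_lt (raw G (leader G) sL) (overall_leader G sI gI))).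
Proof.
  split; [exact nash_leader_sp|].
  split; [exact leader_sp_isp|].
  split.
  - intros A sN sL sI gI HN [HL HLmax] [HI HImax]; split.
    + exact (HLmax sN (nash_leader_sp A sN HN)).
    + rewrite <- overall_leader_zero; exact (HImax sL _ (leader_sp_isp A sL HL)).
  - exists Example.G; split; [|split; [|split; [|split]]].
    + exists Example.sN; exact Example.nash_sN.
    + exists Example.sL; exact Example.leader_eq_sL.
    + exists Example.sI, Example.gI; exact Example.incentive_eq_sI.
    + intros sN sL HN HL.
      rewrite (Example.nash_payoff sN HN), (Example.leader_eq_payoff sL HL).
      apply ER_lt_Fin; lra.
    + intros sL sI gI HL HI.
      rewrite (Example.leader_eq_payoff sL HL), (Example.incentive_eq_payoff sI gI HI).
      apply ER_lt_Fin; lra.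
Qed.
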